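(* The rectangle locus for two pairs of lines in the plane is a hyperbola if and only if neither pair consists of parallel lines, at most one pair consists of orthogonal lines, and the pairs are not translations of each other.
   Context: A pair of lines means two distinct lines; two pairs of lines are distinct pairs, possibly sharing one line. The rectangle locus of two pairs $L_1,L_3$ and $L_2,L_4$ is the set of points $p$ in the plane that are the midpoint both of a segment joining $L_1$ and $L_3$ and of a segment joining $L_2$ and $L_4$, these two segments having equal length (equivalently, centers of possibly degenerate rectangles whose diagonals join the lines of the respective pairs). Here a hyperbola means a set $\{{\bf x}\in\mathbb{R}^2:({\bf x}-{\bf p})^TC({\bf x}-{\bf p})=k\}$ with $C$ a real symmetric $2\times2$ matrix with $\det C<0$, ${\bf p}\in\mathbb{R}^2$, $k\in\mathbb{R}$; the case $k=0$ (a pair of crossing lines) is a degenerate hyperbola and is allowed. One pair is a translation of the other if it is its image under a translation of the plane. *)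

From HB Require Import structures.
From mathcomp Require Import all_boot all_order all_algebra.
From mathcomp Require Import reals.
Set Implicit Arguments. Unset Strict Implicit. Unset Printing Implicit Defensive.
Import Order.TTheory GRing.Theory Num.Theory.
Local Open Scope ring_scope.

Section Defs.
Variable R : realType.

Definition point := (R * R)%type.

Definition padd (x y : point) : point := (x.1 + y.1, x.2 + y.2).
Definition psub (x y : point) : point := (x.1 - y.1, x.2 - y.2).

(* The line through p with direction vector d (d <> 0 assumed where used). *)
Definition line (p d : point) : point -> Prop :=
  fun x => exists t : R, x = (p.1 + t * d.1, p.2 + t * d.2).

Definition nonzero_vec (d : point) : Prop := d.1 != 0 \/ d.2 != 0.

Definition same_set (L M : point -> Prop) : Prop := forall x, L x <-> M x.

Definition parallel_dir (d e : point) : Prop := d.1 * e.2 - d.2 * e.1 = 0.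
Definition orthogonal_dir (d e : point) : Prop := d.1 * e.1 + d.2 * e.2 = 0.

Definition translate (v : point) (L : point -> Prop) : point -> Prop :=
  fun x => L (psub x v).

Definition pair_translate (L1 L3 L2 L4 : point -> Prop) : Prop :=
  exists v : point,
    (same_set (translate v L1) L2 /\ same_set (translate v L3) L4) \/
    (same_set (translate v L1) L4 /\ same_set (translate v L3) L2).

Definition same_pair (L1 L3 L2 L4 : point -> Prop) : Prop :=
  (same_set L1 L2 /\ same_set L3 L4) \/ (same_set L1 L4 /\ same_set L3 L2).

Definition midpoint (a c : point) : point := ((a.1 + c.1) / 2, (a.2 + c.2) / 2).

Definition sqdist (a c : point) : R := (a.1 - c.1) ^+ 2 + (a.2 - c.2) ^+ 2.

Definition rect_locus (L1 L3 L2 L4 : point -> Prop) : point -> Prop :=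
  fun m => exists a c b d : point,
    [/\ L1 a, L3 c, L2 b & L4 d] /\
    [/\ m = midpoint a c, m = midpoint b d & sqdist a c = sqdist b d].

Definition qform (C : 'M[R]_2) (u : point) : R :=
  u.1 * (C 0 0 * u.1 + C 0 1 * u.2) + u.2 * (C 1 0 * u.1 + C 1 1 * u.2).

(* Hyperbola (possibly degenerate, k = 0 allowed). *)
Definition hyperbola (S : point -> Prop) : Prop :=
  exists (C : 'M[R]_2) (p : point) (k : R),
    [/\ C^T = C, \det C < 0 &
        forall x, S x <-> qform C (psub x p) = k].

End Defs.

(* For non-parallel lines p1 + t d1 and p3 + t d3, every point m is the midpoint of
   exactly one segment joining them, and a quarter of its squared length is a
   quadratic polynomial in m with quadratic part |m|^2 + 4 K13(m), where
   K13(m) = (d1.d3) / (d1 x d3)^2 * (d1 x m) (d3 x m).  This quadratic part is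
   positive definite of determinant 1, so the rectangle locus, the zero set of the
   difference of the polynomials of the two pairs, has quadratic part 4 (K13 - K24).
   The difference of two distinct positive definite forms of determinant 1 has
   negative determinant, so the locus is a hyperbola unless K13 = K24, in which case
   it is a line, the empty set or the plane.  Comparing null directions, K13 = K24
   exactly when both pairs are orthogonal (K = 0) or the two pairs have the same
   directions, i.e. one pair is a translate of the other.  For a pair of parallel
   lines all the midpoints lie on the midline, and no hyperbola lies on a line. *)

From HB Require Import structures.
From mathcomp Require Import all_boot all_order all_algebra.
From mathcomp Require Import reals ring lra.
Import Order.TTheory GRing.Theory Num.Theory.
Local Open Scope ring_scope.

Lemma det_mx22 (R : comPzRingType) (C : 'M[R]_2) :
  \det C = C 0 0 * C 1 1 - C 0 1 * C 1 0.
Proof.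
rewrite (expand_det_row _ 0) !big_ord_recl big_ord0 addr0 /cofactor !det_mx11 !mxE /=.
rewrite /= expr0 expr1 mul1r mulN1r mulrN.
by congr (C _ _ * C _ _ - C _ _ * C _ _); apply/val_inj.
Qed.

Definition quadf {R : pzRingType} (a b c x y : R) : R :=
  a * x ^+ 2 + 2 * b * x * y + c * y ^+ 2.

Lemma quadf_split (R : rcfType) (a b c : R) : a * c - b ^+ 2 < 0 ->
  exists v1 v2 w1 w2 : R, v1 * w2 - v2 * w1 != 0 /\
    forall U V, quadf a b c (U * v1 + V * w1) (U * v2 + V * w2) = U * V.
Proof.
move=> hdet; rewrite /quadf.
have [a0|an0] := eqVneq a 0.
  have bn0 : b != 0.
    by apply/eqP => b0; move: hdet; rewrite a0 b0 mul0r expr0n /= subr0 ltxx.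
  exists (1 / (2 * b)), 0, (- c / (2 * b)), 1; split.
    by rewrite mulr1 mul0r subr0 div1r invr_eq0 mulf_neq0 ?pnatr_eq0.
  by move=> U V; rewrite a0; field.
set r := Num.sqrt (b ^+ 2 - a * c).
have D_gt0 : 0 < b ^+ 2 - a * c by rewrite subr_gt0 -subr_lt0.
have rn0 : r != 0 by rewrite gt_eqF // sqrtr_gt0.
have ce : c = (b ^+ 2 - r ^+ 2) / a.
  by rewrite sqr_sqrtr ?ltW //; field.
(* a * quadf a b c x y = (a x + (b - r) y) (a x + (b + r) y): (v, w) is the basis
   dual to the first factor and to the second one divided by a *)
exists ((b + r) / (2 * r * a)), (- 1 / (2 * r)), ((r - b) / (2 * r)), (a / (2 * r)).
split => [|U V]; last by rewrite ce; field; rewrite rn0 an0.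
have -> : (b + r) / (2 * r * a) * (a / (2 * r)) - (-1 / (2 * r)) * ((r - b) / (2 * r))
          = 1 / (2 * r) by field; rewrite rn0 an0.
by rewrite div1r invr_eq0 mulf_neq0 ?pnatr_eq0.
Qed.

Lemma uv_affine_eq0 (R : realFieldType) (k al be ga : R) :
  (forall U V, U * V = k -> al * U + be * V = ga) -> [/\ al = 0, be = 0 & ga = 0].
Proof.
move=> h.
have h1 := h 1 k (mul1r k).
have h2 : al * -1 + be * - k = ga by apply: h; rewrite mulN1r opprK.
have ga0 : ga = 0 by lra.
have [k0|kn0] := eqVneq k 0.
  move: h1 (h 0 1) (h (-1) 0); rewrite k0 !mul0r !mulr0 => h1 h3 h4.
  by have := h3 erefl; have := h4 erefl; split; lra.
have h3 : al * 2 + be * (k / 2) = ga by apply: h; field.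
have /eqP : be * k = 0 by lra.
rewrite mulf_eq0 (negbTE kn0) orbF => /eqP be0.
by split => //; lra.
Qed.

Lemma det1_posdef_sub_det_lt0 {R : realFieldType} {a b c p q r : R} :
  a * c - b ^+ 2 = 1 -> p * r - q ^+ 2 = 1 -> 0 < a + c -> 0 < p + r ->
  (a, b, c) != (p, q, r) -> (a - p) * (c - r) - (b - q) ^+ 2 < 0.
Proof.
move=> det1 det2 tr1 tr2 neq.
have a_gt0 : 0 < a by nra.
have p_gt0 : 0 < p by nra.
set X := _ - _ ^+ 2.
have E : a * p * X + ((a - p) ^+ 2 + (a * q - p * b) ^+ 2) =
         p * (a - p) * (a * c - b ^+ 2 - 1) + a * (p - a) * (p * r - q ^+ 2 - 1).
  by rewrite /X; ring.
rewrite det1 det2 subrr !mulr0 addr0 in E.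
have S_ge0 : 0 <= (a - p) ^+ 2 + (a * q - p * b) ^+ 2 by rewrite addr_ge0 ?sqr_ge0.
rewrite lt_neqAle -(pmulr_rle0 _ (mulr_gt0 a_gt0 p_gt0)).
have -> : a * p * X = - ((a - p) ^+ 2 + (a * q - p * b) ^+ 2).
  by apply/eqP; rewrite -subr_eq0 opprK E.
rewrite oppr_le0 S_ge0 andbT.
apply: contraNneq neq => X0; move: E; rewrite X0 mulr0 add0r => /eqP.
rewrite paddr_eq0 ?sqr_ge0 // !sqrf_eq0 !subr_eq0 => /andP[/eqP ap /eqP].
rewrite ap => /(mulfI (lt0r_neq0 p_gt0)) qb; subst a q.
have /(mulfI (lt0r_neq0 p_gt0)) -> // : p * c = p * r by lra.
Qed.

Section Vectors.
Context {R : realType}.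
Implicit Types d e m u v : point R.

Definition cross d m : R := d.1 * m.2 - d.2 * m.1.
Definition dot d m : R := d.1 * m.1 + d.2 * m.2.

Lemma parallel_dirE d e : parallel_dir d e = (cross d e = 0).
Proof. by []. Qed.

Lemma orthogonal_dirE d e : orthogonal_dir d e = (dot d e = 0).
Proof. by []. Qed.

Lemma crossC d e : cross d e = - cross e d.
Proof. by rewrite /cross; ring. Qed.

Lemma norm2_gt0 d : nonzero_vec d -> 0 < d.1 ^+ 2 + d.2 ^+ 2.
Proof.
by case=> h; [rewrite ltr_pwDl | rewrite ltr_pwDr]; rewrite ?sqr_ge0 ?exprn_even_gt0.
Qed.

Lemma cross_eq0_scale {d e} : nonzero_vec d -> cross d e = 0 ->
  exists l, e = (l * d.1, l * d.2).
Proof.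
move=> /norm2_gt0 /lt0r_neq0 n0 de0; exists (dot d e / (d.1 ^+ 2 + d.2 ^+ 2)).
case: e de0 => x y de0; congr pair.
  transitivity ((dot d (x, y) * d.1 - d.2 * cross d (x, y)) / (d.1 ^+ 2 + d.2 ^+ 2)).
    by rewrite /dot /cross /=; field.
  by rewrite de0 mulr0 subr0 mulrAC.
transitivity ((dot d (x, y) * d.2 + d.1 * cross d (x, y)) / (d.1 ^+ 2 + d.2 ^+ 2)).
  by rewrite /dot /cross /=; field.
by rewrite de0 mulr0 addr0 mulrAC.
Qed.

Lemma cross_eq0_trans {e u v} : nonzero_vec e ->
  cross e u = 0 -> cross e v = 0 -> cross u v = 0.
Proof.
move=> ne eu ev.
have i1 : cross u v * e.1 = u.1 * cross e v - v.1 * cross e u by rewrite /cross; ring.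
have i2 : cross u v * e.2 = u.2 * cross e v - v.2 * cross e u by rewrite /cross; ring.
rewrite eu ev !mulr0 subrr in i1 i2.
by case: ne => h; [move/eqP: i1 | move/eqP: i2]; rewrite mulf_eq0 (negbTE h) orbF => /eqP.
Qed.

End Vectors.

Section Hyperbola.
Context {R : realType}.
Implicit Types S : point R -> Prop.

Lemma hyperbola_uv S : hyperbola S ->
  exists (p v w : point R) (k : R), cross v w != 0 /\
    forall U V, S (p.1 + U * v.1 + V * w.1, p.2 + U * v.2 + V * w.2) <-> U * V = k.
Proof.
move=> [C [p [k [CT detC SE]]]].
have C10 : C 1 0 = C 0 1 by rewrite -[in LHS]CT mxE.
have [v1 [v2 [w1 [w2 [vw Q]]]]] : exists v1 v2 w1 w2 : R, v1 * w2 - v2 * w1 != 0 /\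
    forall U V, quadf (C 0 0) (C 0 1) (C 1 1) (U * v1 + V * w1) (U * v2 + V * w2) = U * V.
  by apply: quadf_split; move: detC; rewrite det_mx22 C10 expr2.
exists p, (v1, v2), (w1, w2), k; split => // U V.
rewrite SE -(Q U V) (_ : qform _ _ = quadf (C 0 0) (C 0 1) (C 1 1)
  (U * v1 + V * w1) (U * v2 + V * w2)) //.
by rewrite /qform /psub /quadf /= C10; ring.
Qed.

Lemma hyperbola_sub_line S u1 u2 c : hyperbola S ->
  (forall x, S x -> u1 * x.1 + u2 * x.2 = c) -> u1 = 0 /\ u2 = 0.
Proof.
move=> /hyperbola_uv [p [v [w [k [vw SE]]]]] Sl.
have [lv lw _] : [/\ u1 * v.1 + u2 * v.2 = 0, u1 * w.1 + u2 * w.2 = 0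
                  & c - (u1 * p.1 + u2 * p.2) = 0].
  by apply: (@uv_affine_eq0 _ k) => U V /SE /Sl /= <-; ring.
have e1 : u1 * cross v w = w.2 * (u1 * v.1 + u2 * v.2) - v.2 * (u1 * w.1 + u2 * w.2).
  by rewrite /cross; ring.
have e2 : u2 * cross v w = v.1 * (u1 * w.1 + u2 * w.2) - w.1 * (u1 * v.1 + u2 * v.2).
  by rewrite /cross; ring.
rewrite lv lw !mulr0 subrr in e1 e2.
by split; apply/eqP; [move/eqP: e1 | move/eqP: e2]; rewrite mulf_eq0 (negbTE vw) orbF.
Qed.

Lemma hyperbola_not_affine S u1 u2 c : hyperbola S ->
  ~ (forall x, S x <-> u1 * x.1 + u2 * x.2 = c).
Proof.
move=> hS Sl.
have [u1_0 u2_0] := @hyperbola_sub_line S u1 u2 c hS (fun x => proj1 (Sl x)).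
rewrite {}u1_0 {}u2_0 in Sl.
have /hyperbola_uv [p [v [w [k [_ SE]]]]] := hS.
(* with u = 0, membership in S no longer depends on the point *)
have : 1 * (k + 1) = k.
  by apply/SE/Sl; move/Sl: (proj2 (SE 1 k) (mul1r k)); rewrite !mul0r.
lra.
Qed.

Lemma hyperbola_of_conic S (a b c b1 b2 g : R) : a * c - b ^+ 2 < 0 ->
  (forall m, S m <-> quadf a b c m.1 m.2 + b1 * m.1 + b2 * m.2 + g = 0) ->
  hyperbola S.
Proof.
move=> det_lt0 SE.
have Dn0 : a * c - b ^+ 2 != 0 by rewrite lt_eqF.
pose C : 'M[R]_2 := \matrix_(i, j) if i != j then b else if i == 0 then a else c.
pose p : point R := ((b * b2 - c * b1) / (2 * (a * c - b ^+ 2)),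
                     (b * b1 - a * b2) / (2 * (a * c - b ^+ 2))).
exists C, p, (quadf a b c p.1 p.2 - g); split.
- by apply/matrixP => i j; rewrite !mxE eq_sym; case: eqVneq => [->|].
- by rewrite det_mx22 !mxE /= -expr2.
move=> m; rewrite SE (_ : _ + g = qform C (psub m p) - (quadf a b c p.1 p.2 - g)).
  by split => [/eqP|->]; rewrite ?subrr // subr_eq0 => /eqP.
by rewrite /qform /psub /quadf !mxE /=; field.
Qed.

End Hyperbola.

Section Lines.
Context {R : realType}.
Implicit Types p q r d e f v : point R.

Lemma same_set_sym {A B : point R -> Prop} : same_set A B -> same_set B A.
Proof. by move=> AB x; rewrite AB. Qed.

Lemma same_set_trans {A B C : point R -> Prop} :
  same_set A B -> same_set B C -> same_set A C.
Proof. by move=> AB BC x; rewrite AB BC. Qed.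

Lemma nonzero_vec_scale {d l} : nonzero_vec (l * d.1, l * d.2) -> l != 0.
Proof. by apply: contraPneq => ->; rewrite /nonzero_vec /= !mul0r eqxx; case. Qed.

Lemma same_line_parallel q d r e : nonzero_vec d -> nonzero_vec e ->
  cross d e = 0 -> cross d (psub r q) = 0 -> same_set (line q d) (line r e).
Proof.
move=> nd ne de dqr.
have [l el] := cross_eq0_scale nd de; rewrite el in ne; have ln0 := nonzero_vec_scale ne.
have [s /pair_equal_spec[/= rq1 rq2]] := cross_eq0_scale nd dqr.
have -> : r = (q.1 + s * d.1, q.2 + s * d.2).
  by rewrite -rq1 -rq2 {rq1 rq2 dqr}; case: r => r1 r2 /=; congr pair; ring.
move=> x; rewrite el; split => -[t ->].
  by exists ((t - s) / l); congr pair => /=; field.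
by exists (s + t * l); congr pair => /=; ring.
Qed.

Lemma translate_line v q d : same_set (translate v (line q d)) (line (padd q v) d).
Proof.
move=> x; rewrite /translate /psub /padd; split => -[t xt]; exists t.
  by case: x xt => x1 x2 /pair_equal_spec[/= x1t x2t]; congr pair => /=; lra.
by rewrite xt /=; congr pair; ring.
Qed.

Lemma translate_line_parallel v p d q e :
  same_set (translate v (line p d)) (line q e) -> cross d e = 0.
Proof.
move=> h; have pvq := same_set_trans (same_set_sym (translate_line v p d)) h.
have [t0 /pair_equal_spec[/= e01 e02]] := proj1 (pvq _) (ex_intro _ 0 erefl).
have [t1 /pair_equal_spec[/= e11 e12]] := proj1 (pvq _) (ex_intro _ 1 erefl).
have -> : d = ((t1 - t0) * e.1, (t1 - t0) * e.2).
  case: d {h pvq} e01 e02 e11 e12 => d1 d2 /=; rewrite !mul0r !mul1r !addr0 => *.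
  by congr pair; lra.
by rewrite /cross /=; ring.
Qed.

Lemma translate_lines_exists q1 f1 r1 e1 q2 f2 r2 e2 :
  nonzero_vec f1 -> nonzero_vec f2 -> nonzero_vec e1 -> nonzero_vec e2 ->
  cross f1 f2 != 0 -> cross f1 e1 = 0 -> cross f2 e2 = 0 ->
  exists v, same_set (translate v (line q1 f1)) (line r1 e1) /\
            same_set (translate v (line q2 f2)) (line r2 e2).
Proof.
move=> nf1 nf2 ne1 ne2 f12 fe1 fe2.
set c1 := cross f1 (psub r1 q1); set c2 := cross f2 (psub r2 q2).
(* Cramer's rule for cross f1 v = c1, cross f2 v = c2 *)
exists ((c1 * f2.1 - f1.1 * c2) / cross f1 f2, (f2.2 * c1 - f1.2 * c2) / cross f1 f2).
split; apply: same_set_trans (translate_line _ _ _) _; apply: same_line_parallel => //;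
  by move: f12; rewrite /c1 /c2 /cross /psub /padd /= => f12; field.
Qed.

Definition same_dir_pair d1 d3 d2 d4 : Prop :=
  (parallel_dir d1 d2 /\ parallel_dir d3 d4) \/ (parallel_dir d1 d4 /\ parallel_dir d3 d2).

Lemma pair_translateP p1 d1 p3 d3 p2 d2 p4 d4 :
  nonzero_vec d1 -> nonzero_vec d2 -> nonzero_vec d3 -> nonzero_vec d4 ->
  cross d1 d3 != 0 ->
  pair_translate (line p1 d1) (line p3 d3) (line p2 d2) (line p4 d4) <->
  same_dir_pair d1 d3 d2 d4.
Proof.
move=> n1 n2 n3 n4 d13; split.
  by case=> v [[t1 t3]|[t1 t3]]; [left | right];
    split; apply: translate_line_parallel; eassumption.
case=> [[d12 d34]|[d14 d32]].
  by have [v [t1 t3]] := translate_lines_exists p1 d1 p2 d2 p3 d3 p4 d4 n1 n3 n2 n4 d13 d12 d34;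
    exists v; left.
by have [v [t1 t3]] := translate_lines_exists p1 d1 p4 d4 p3 d3 p2 d2 n1 n3 n4 n2 d13 d14 d32;
  exists v; right.
Qed.

End Lines.

Section Segments.
Context {R : realType}.
Implicit Types p d a c m : point R.

(* When cross d1 d3 != 0, the unique segment from line p1 d1 to line p3 d3 with
   midpoint m ends at p3 + s d3 on the second line; this is the squared distance
   from m to that endpoint, i.e. a quarter of the squared length of the segment. *)
Definition midseg_sq p1 d1 p3 d3 m : R :=
  let s := cross d1 (2 * m.1 - p1.1 - p3.1, 2 * m.2 - p1.2 - p3.2) / cross d1 d3 in
  (m.1 - p3.1 - s * d3.1) ^+ 2 + (m.2 - p3.2 - s * d3.2) ^+ 2.

Lemma sqdist_midseg {p1 d1 p3 d3 a c} : cross d1 d3 != 0 ->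
  line p1 d1 a -> line p3 d3 c -> sqdist a c = 4 * midseg_sq p1 d1 p3 d3 (midpoint a c).
Proof.
move=> d13 [t ->] [s ->]; move: d13.
by rewrite /midseg_sq /sqdist /midpoint /cross /= => d13; field.
Qed.

Lemma midseg_exists p1 d1 p3 d3 m : cross d1 d3 != 0 ->
  exists a c, [/\ line p1 d1 a, line p3 d3 c & m = midpoint a c].
Proof.
move=> d13; set w := (2 * m.1 - p1.1 - p3.1, 2 * m.2 - p1.2 - p3.2).
exists (p1.1 + cross w d3 / cross d1 d3 * d1.1, p1.2 + cross w d3 / cross d1 d3 * d1.2).
exists (p3.1 + cross d1 w / cross d1 d3 * d3.1, p3.2 + cross d1 w / cross d1 d3 * d3.2).
split; [by eexists | by eexists |].
by move: d13; rewrite /midpoint /cross /w /= => d13; case: m {w} => m1 m2 /=; congr pair; field.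
Qed.

Lemma rect_locusE p1 d1 p3 d3 p2 d2 p4 d4 m :
  cross d1 d3 != 0 -> cross d2 d4 != 0 ->
  rect_locus (line p1 d1) (line p3 d3) (line p2 d2) (line p4 d4) m <->
  midseg_sq p1 d1 p3 d3 m = midseg_sq p2 d2 p4 d4 m.
Proof.
move=> d13 d24; split.
  move=> [a [c [b [d [[la lc lb ld] [-> mbd]]]]]].
  by rewrite (sqdist_midseg d13 la lc) mbd (sqdist_midseg d24 lb ld); lra.
move=> eqN.
have [a [c [la lc mac]]] := midseg_exists p1 _ p3 _ m d13.
have [b [d [lb ld mbd]]] := midseg_exists p2 _ p4 _ m d24.
exists a, c, b, d; split => //; split => //.
by rewrite (sqdist_midseg d13 la lc) (sqdist_midseg d24 lb ld) -mac -mbd eqN.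
Qed.

Lemma cross_midpoint_parallel {p1 d1 p3 d3 a c} : cross d1 d3 = 0 ->
  line p1 d1 a -> line p3 d3 c -> 2 * cross d1 (midpoint a c) = cross d1 (padd p1 p3).
Proof.
move=> d13 [t ->] [s ->]; apply/eqP; rewrite -subr_eq0; apply/eqP.
by rewrite -(mulr0 s) -d13 /cross /midpoint /padd /=; field.
Qed.

Lemma parallel_midpoints_not_hyperbola (S : point R -> Prop) p1 d1 p3 d3 :
  nonzero_vec d1 -> cross d1 d3 = 0 ->
  (forall m, S m -> exists a c, [/\ line p1 d1 a, line p3 d3 c & m = midpoint a c]) ->
  ~ hyperbola S.
Proof.
move=> n1 d13 Smid hS.
have [] := @hyperbola_sub_line _ S (- 2 * d1.2) (2 * d1.1) (cross d1 (padd p1 p3)) hS.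
  move=> m /Smid [a [c [la lc ->]]].
  by rewrite -(cross_midpoint_parallel d13 la lc) /cross; ring.
by move=> h1 h2; case: n1 => /eqP; apply; lra.
Qed.

End Segments.

Section Kform.
Context {R : realType}.
Implicit Types p d m : point R.

Definition kform d1 d3 m : R :=
  dot d1 d3 / cross d1 d3 ^+ 2 * (cross d1 m * cross d3 m).

Lemma midseg_sq_expand p1 d1 p3 d3 : cross d1 d3 != 0 ->
  exists b1 b2 g, forall m, midseg_sq p1 d1 p3 d3 m =
    m.1 ^+ 2 + m.2 ^+ 2 + 4 * kform d1 d3 m + b1 * m.1 + b2 * m.2 + g.
Proof.
set N := midseg_sq p1 d1 p3 d3 => d13.
(* midseg_sq is a quadratic polynomial in m: read off its affine part from its values *)
exists ((N (1, 0) - N (-1, 0)) / 2), ((N (0, 1) - N (0, -1)) / 2), (N (0, 0)) => m.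
move: d13; rewrite {}/N /midseg_sq /kform /cross /dot /=.
by case: p1 d1 p3 d3 m => [? ?] [? ?] [? ?] [? ?] [? ?] /= d13; field.
Qed.

Lemma rect_locus_conic p1 d1 p3 d3 p2 d2 p4 d4 :
  cross d1 d3 != 0 -> cross d2 d4 != 0 ->
  exists b1 b2 g, forall m,
    rect_locus (line p1 d1) (line p3 d3) (line p2 d2) (line p4 d4) m <->
    4 * (kform d1 d3 m - kform d2 d4 m) + b1 * m.1 + b2 * m.2 + g = 0.
Proof.
move=> d13 d24.
have [b1 [b2 [g N13]]] := midseg_sq_expand p1 _ p3 _ d13.
have [b1' [b2' [g' N24]]] := midseg_sq_expand p2 _ p4 _ d24.
exists (b1 - b1'), (b2 - b2'), (g - g') => m.
by rewrite rect_locusE // N13 N24; split => h; lra.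
Qed.

(* (a, b, c) is the matrix of the quadratic part m.1^2 + m.2^2 + 4 kform d1 d3 m
   of midseg_sq (see midseg_sq_expand): positive definite of determinant 1. *)
Lemma kform_quadf {d1 d3} : cross d1 d3 != 0 ->
  exists a b c, [/\ forall m, 4 * kform d1 d3 m = quadf (a - 1) b (c - 1) m.1 m.2,
                     a * c - b ^+ 2 = 1 & 0 < a + c].
Proof.
move=> d13; set k := dot d1 d3 / cross d1 d3 ^+ 2.
exists (1 + 4 * k * (d1.2 * d3.2)), (- 2 * k * (d1.1 * d3.2 + d1.2 * d3.1)),
       (1 + 4 * k * (d1.1 * d3.1)).
split => [m||]; first by rewrite /kform -/k /quadf /cross; ring.
  by move: d13; rewrite /k /cross /dot => d13; field; exact: d13.
have -> : 1 + 4 * k * (d1.2 * d3.2) + (1 + 4 * k * (d1.1 * d3.1)) =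
          2 + 4 * (dot d1 d3 / cross d1 d3) ^+ 2.
  by rewrite /k /dot; field.
by have := sqr_ge0 (dot d1 d3 / cross d1 d3); lra.
Qed.

Lemma kformC d1 d3 m : kform d1 d3 m = kform d3 d1 m.
Proof.
by rewrite /kform [cross d3 d1]crossC sqrrN [cross d3 m * _]mulrC /dot (mulrC d3.1) (mulrC d3.2).
Qed.

Lemma kform_parallel d1 d3 d2 d4 m :
  nonzero_vec d1 -> nonzero_vec d2 -> nonzero_vec d3 -> nonzero_vec d4 ->
  cross d1 d3 != 0 -> cross d1 d2 = 0 -> cross d3 d4 = 0 ->
  kform d1 d3 m = kform d2 d4 m.
Proof.
move=> n1 n2 n3 n4 d13 d12 d34.
have [l el] := cross_eq0_scale n1 d12; rewrite el in n2 *.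
have [k ek] := cross_eq0_scale n3 d34; rewrite ek in n4 *.
have ln0 := nonzero_vec_scale n2; have kn0 := nonzero_vec_scale n4.
have cE : cross (l * d1.1, l * d1.2) (k * d3.1, k * d3.2) = l * k * cross d1 d3.
  by rewrite /cross /=; ring.
have dE : dot (l * d1.1, l * d1.2) (k * d3.1, k * d3.2) = l * k * dot d1 d3.
  by rewrite /dot /=; ring.
have smE a d : cross (a * d.1, a * d.2) m = a * cross d m by rewrite /cross /=; ring.
rewrite /kform cE dE !smE; field.
by rewrite ln0 kn0 d13.
Qed.

Lemma kform_eqP d1 d3 d2 d4 :
  nonzero_vec d1 -> nonzero_vec d2 -> nonzero_vec d3 -> nonzero_vec d4 ->
  cross d1 d3 != 0 -> cross d2 d4 != 0 ->
  (forall m, kform d1 d3 m = kform d2 d4 m) <->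
  (orthogonal_dir d1 d3 /\ orthogonal_dir d2 d4) \/ same_dir_pair d1 d3 d2 d4.
Proof.
move=> n1 n2 n3 n4 d13 d24; rewrite /same_dir_pair !parallel_dirE !orthogonal_dirE.
split => [kE|]; last first.
  case=> [[o13 o24]|[[d12 d34]|[d14 d32]]] m.
  - by rewrite /kform o13 o24 !mul0r.
  - exact: kform_parallel.
  - by rewrite (kform_parallel d1 d3 d4 d2) // kformC.
have [o24|no24] := eqVneq (dot d2 d4) 0.
  have : kform d1 d3 (padd d1 d3) = - dot d1 d3.
    by move: d13; rewrite /kform /cross /dot /padd /= => d13; field; exact: d13.
  by rewrite kE /kform o24 !mul0r => /esym/eqP; rewrite oppr_eq0 => /eqP; left.
have k24 : dot d2 d4 / cross d2 d4 ^+ 2 != 0 by rewrite mulf_neq0 // invr_eq0 expf_neq0.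
(* d1 and d3 are null directions of kform d1 d3 = kform d2 d4, hence parallel to d2 or d4 *)
have null d : kform d2 d4 d = 0 -> cross d2 d = 0 \/ cross d4 d = 0.
  rewrite /kform => /eqP; rewrite mulf_eq0 (negbTE k24) mulf_eq0 /=.
  by case/orP => /eqP; [left | right].
have crossxx d : cross d d = 0 by rewrite /cross mulrC subrr.
have /null[c21|c41] : kform d2 d4 d1 = 0 by rewrite -kE /kform crossxx !mul0r mulr0.
  have /null[c23|c43] : kform d2 d4 d3 = 0 by rewrite -kE /kform crossxx !mulr0.
    by move: d13; rewrite (cross_eq0_trans n2 c21 c23) eqxx.
  by right; left; rewrite crossC c21 oppr0 crossC c43 oppr0.
have /null[c23|c43] : kform d2 d4 d3 = 0 by rewrite -kE /kform crossxx !mulr0.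
  by right; right; rewrite crossC c41 oppr0 crossC c23 oppr0.
by move: d13; rewrite (cross_eq0_trans n4 c41 c43) eqxx.
Qed.

Lemma rect_locus_hyperbolaP p1 d1 p3 d3 p2 d2 p4 d4 :
  cross d1 d3 != 0 -> cross d2 d4 != 0 ->
  hyperbola (rect_locus (line p1 d1) (line p3 d3) (line p2 d2) (line p4 d4)) <->
  ~ (forall m, kform d1 d3 m = kform d2 d4 m).
Proof.
move=> d13 d24; have [b1 [b2 [g locusE]]] := rect_locus_conic p1 _ p3 _ p2 _ p4 _ d13 d24.
split=> [hH kE | kN].
  apply: (@hyperbola_not_affine _ _ b1 b2 (- g) hH) => m.
  by rewrite locusE kE subrr mulr0 add0r; split=> h; lra.
have [a [b [c [K13 det13 tr13]]]] := kform_quadf d13.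
have [a' [b' [c' [K24 det24 tr24]]]] := kform_quadf d24.
apply: (@hyperbola_of_conic _ _ (a - a') (b - b') (c - c') b1 b2 g).
  apply: det1_posdef_sub_det_lt0 det13 det24 tr13 tr24 _.
  apply: contra_notN kN => /eqP [ea eb ec] m.
  by have := K13 m; have := K24 m; rewrite ea eb ec; lra.
move=> m; rewrite locusE mulrBr K13 K24.
suff -> : quadf (a - 1) b (c - 1) m.1 m.2 - quadf (a' - 1) b' (c' - 1) m.1 m.2 =
          quadf (a - a') (b - b') (c - c') m.1 m.2 by [].
by rewrite /quadf; ring.
Qed.

End Kform.

Theorem theorem4p6 (R : realType) (p1 d1 p2 d2 p3 d3 p4 d4 : point R) :
  nonzero_vec d1 -> nonzero_vec d2 -> nonzero_vec d3 -> nonzero_vec d4 ->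
  (* each pair consists of two distinct lines *)
  ~ same_set (line p1 d1) (line p3 d3) ->
  ~ same_set (line p2 d2) (line p4 d4) ->
  (* the two pairs are distinct *)
  ~ same_pair (line p1 d1) (line p3 d3) (line p2 d2) (line p4 d4) ->
  hyperbola (rect_locus (line p1 d1) (line p3 d3) (line p2 d2) (line p4 d4))
  <->
  [/\ ~ parallel_dir d1 d3 /\ ~ parallel_dir d2 d4,
      ~ (orthogonal_dir d1 d3 /\ orthogonal_dir d2 d4) &
      ~ pair_translate (line p1 d1) (line p3 d3) (line p2 d2) (line p4 d4)].
Proof.
move=> n1 n2 n3 n4 _ _ _.
set L := rect_locus _ _ _ _.
have criterion : cross d1 d3 != 0 -> cross d2 d4 != 0 -> hyperbola L <->
    ~ ((orthogonal_dir d1 d3 /\ orthogonal_dir d2 d4) \/ same_dir_pair d1 d3 d2 d4).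
  move=> d13 d24; rewrite rect_locus_hyperbolaP // -kform_eqP //.
split => [hL | [[/eqP d13 /eqP d24] north ntrans]].
  have d13 : cross d1 d3 != 0.
    apply/eqP => par; apply: (parallel_midpoints_not_hyperbola L p1 d1 p3 d3 n1 par _ hL).
    by move=> m [a [c [b [d [[la lc _ _] [-> _ _]]]]]]; exists a, c.
  have d24 : cross d2 d4 != 0.
    apply/eqP => par; apply: (parallel_midpoints_not_hyperbola L p2 d2 p4 d4 n2 par _ hL).
    by move=> m [a [c [b [d [[_ _ lb ld] [_ -> _]]]]]]; exists b, d.
  move: hL; rewrite criterion // -(pair_translateP p1 d1 p3 d3 p2 d2 p4 d4) //.
  by split; [split; apply/eqP | tauto | tauto].
by rewrite criterion // -(pair_translateP p1 d1 p3 d3 p2 d2 p4 d4) //; tauto.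
Qed.
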